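(* Let $k\ge1$, let $A_k$ be the matrix defined below, and let $\mathbf{e}_{2k+1}\in\mathbb{Z}^{2k+1}$ be the last standard unit vector. Let $G=G_{A_k,\mathbf{e}_{2k+1},\mathcal{R}_{\mathrm{lex}}(A_k)}$. Then the edge-connectivity of $G$ equals $1$, whereas the minimal degree of $G$ equals $k$.
   Context: Let $I_k$ be the $k\times k$ identity matrix and $\mathbf{1}_k$ the all-ones vector in $\mathbb{Z}^k$. Define $$A_k=\begin{pmatrix} I_k & I_k & 0 & 0 & -\mathbf{1}_k & \mathbf{0}\\ 0&0&I_k&I_k&\mathbf{0}&-\mathbf{1}_k\\ 0&0&0&0&1&1\end{pmatrix}\in\mathbb{Z}^{(2k+1)\times(4k+2)}$$ (zero blocks of appropriate sizes; last two columns are single columns). For $A\in\mathbb{Z}^{d\times n}$, $\mathbf{b}\in\mathbb{Z}^d$: fiber $\mathcal{F}_A(\mathbf{b})=\{\mathbf{u}\in\mathbb{Z}_{\ge0}^n:A\mathbf{u}=\mathbf{b}\}$; for $\mathcal{M}\subset\mathbb{Z}^n$, the fiber graph $G_{A,\mathbf{b},\mathcal{M}}$ has vertex set $\mathcal{F}_A(\mathbf{b})$, distinct $\mathbf{u},\mathbf{v}$ adjacent iff $\mathbf{u}-\mathbf{v}\in\pm\mathcal{M}$. The toric ideal of $A$ is $I_A=\langle \mathbf{x}^{\mathbf{u}^+}-\mathbf{x}^{\mathbf{u}^-}:\mathbf{u}\in\ker(A)\cap\mathbb{Z}^n\rangle\subset K[x_1,\dots,x_n]$, where $\mathbf{u}^+,\mathbf{u}^-\in\mathbb{Z}^n_{\ge0}$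 are the positive and negative parts of $\mathbf{u}$. The lexicographic term order $\prec_{\mathrm{lex}}$ on $\mathbb{Z}_{\ge0}^n$: $\mathbf{u}\prec_{\mathrm{lex}}\mathbf{v}$ iff $u_i<v_i$ for the smallest $i$ with $u_i\ne v_i$. $\mathcal{R}_{\mathrm{lex}}(A)$ is the set of vectors $\mathbf{u}$ such that $\mathbf{x}^{\mathbf{u}^+}-\mathbf{x}^{\mathbf{u}^-}$ (with leading term $\mathbf{x}^{\mathbf{u}^+}$) belongs to the reduced Gröbner basis of $I_A$ with respect to $\prec_{\mathrm{lex}}$. A graph is $\ell$-edge-connected if it has more than one vertex and removing fewer than $\ell$ edges leaves it connected; the edge-connectivity is the largest such $\ell$. Minimal degree = minimum vertex degree. *)

From HB Require Import structures.
From mathcomp Require Import all_boot all_order all_algebra.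
From mathcomp.multinomials Require Import mpoly.
From Stdlib Require Import Relations.
Set Implicit Arguments. Unset Strict Implicit. Unset Printing Implicit Defensive.
Import Order.TTheory GRing.Theory Num.Theory.
Local Open Scope ring_scope.

(* Columns (0-indexed): [0,k) first I_k, [k,2k) second I_k, [2k,3k) third,
   [3k,4k) fourth, 4k and 4k+1 the two single columns. *)
Definition Ak (k : nat) : 'M[int]_(2 * k + 1, 4 * k + 2) :=
  \matrix_(i < 2 * k + 1, j < 4 * k + 2)
    if (i < k)%N then
      (if (j == i :> nat) || (j == k + i :> nat) then 1
       else if j == 4 * k :> nat then -1 else 0)
    else if (i < 2 * k)%N then
      (if (j == k + i :> nat) || (j == 2 * k + i :> nat) then 1
       else if j == (4 * k).+1 :> nat then -1 else 0)
    else
      (if (j == 4 * k :> nat) || (j == (4 * k).+1 :> nat) then 1 else 0).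

Definition e_last (k : nat) : 'cV[int]_(2 * k + 1) :=
  \col_(i < 2 * k + 1) (if i == 2 * k :> nat then 1 else 0).

Section Toric.
Variables (K : fieldType) (d n : nat) (A : 'M[int]_(d, n)).

Definition posp (u : 'cV[int]_n) : 'X_{1..n} :=
  [multinom absz (Num.max (u i ord0) 0%R) | i < n].
Definition negp (u : 'cV[int]_n) : 'X_{1..n} :=
  [multinom absz (Num.max (- u i ord0) 0%R) | i < n].

Definition binom (u : 'cV[int]_n) : {mpoly K[n]} := 'X_[posp u] - 'X_[negp u].

Definition in_kernel (u : 'cV[int]_n) : Prop := A *m u = 0.

Definition toric_ideal (p : {mpoly K[n]}) : Prop :=
  exists s : seq ({mpoly K[n]} * 'cV[int]_n),
    (forall x, x \in s -> in_kernel x.2) /\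
    p = \sum_(x <- s) x.1 * binom x.2.

End Toric.

Section GB.
Variables (K : fieldType) (n : nat).

Definition lex_lt (m m' : 'X_{1..n}) : Prop :=
  exists i : 'I_n, (forall j : 'I_n, (j < i)%N -> m j = m' j) /\ (m i < m' i)%N.

Definition mdivides (m m' : 'X_{1..n}) : Prop := forall i : 'I_n, (m i <= m' i)%N.

Definition is_lead (p : {mpoly K[n]}) (m : 'X_{1..n}) : Prop :=
  m \in msupp p /\ forall m', m' \in msupp p -> m' = m \/ lex_lt m' m.

Definition reduced_groebner_basis (I : {mpoly K[n]} -> Prop)
    (G : seq {mpoly K[n]}) : Prop :=
  [/\ (forall g, g \in G -> I g /\ g != 0),
      (forall f, I f -> f != 0 -> forall mf, is_lead f mf ->
         exists g, exists mg, [/\ g \in G, is_lead g mg & mdivides mg mf]),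
      (forall g mg, g \in G -> is_lead g mg -> g@_mg = 1) &
      (forall g g' mg, g \in G -> g' \in G -> g != g' -> is_lead g mg ->
         forall m, m \in msupp g' -> ~ mdivides mg m)].

End GB.

Definition R_lex (K : fieldType) (d n : nat) (A : 'M[int]_(d, n))
    (u : 'cV[int]_n) : Prop :=
  exists G, reduced_groebner_basis (@toric_ideal K _ _ A) G /\
            binom K u \in G /\ is_lead (binom K u) (posp u).

Definition fiber (d n : nat) (A : 'M[int]_(d, n)) (b : 'cV[int]_d)
    (u : 'cV[int]_n) : Prop :=
  (forall i, 0 <= u i 0) /\ A *m u = b.

Definition fiber_adj (n : nat) (M : 'cV[int]_n -> Prop) (u v : 'cV[int]_n) : Prop :=
  u <> v /\ (M (u - v) \/ M (v - u)).

Section Graphs.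
Variables (T : eqType) (V : T -> Prop) (E : T -> T -> Prop).

Definition adj_minus (F : seq (T * T)) (x y : T) : Prop :=
  E x y /\ (x, y) \notin F /\ (y, x) \notin F.

Definition graph_connected (E' : T -> T -> Prop) : Prop :=
  forall x y, V x -> V y ->
    clos_refl_trans T (fun a b => V a /\ V b /\ E' a b) x y.

Definition l_edge_connected (l : nat) : Prop :=
  (exists x y, V x /\ V y /\ x <> y) /\
  forall F : seq (T * T), (size F < l)%N -> graph_connected (adj_minus F).

Definition edge_connectivity_is (l : nat) : Prop :=
  l_edge_connected l /\ forall m, l_edge_connected m -> (m <= l)%N.

Definition has_degree (x : T) (dg : nat) : Prop :=
  exists s : seq T, [/\ uniq s, size s = dg &
    forall y, y \in s <-> (V y /\ E x y)].

Definition degree_at_least (x : T) (dg : nat) : Prop :=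
  exists s : seq T, [/\ uniq s, size s = dg &
    forall y, y \in s -> (V y /\ E x y)].

Definition min_degree_is (dg : nat) : Prop :=
  (exists x, V x /\ has_degree x dg) /\
  forall x, V x -> degree_at_least x dg.

End Graphs.

From mathcomp Require Import all_boot all_order all_algebra.
From mathcomp.multinomials Require Import mpoly.
From mathcomp Require Import zify.
From Stdlib Require Import Relations.
Set Implicit Arguments. Unset Strict Implicit. Unset Printing Implicit Defensive.
Import Order.TTheory GRing.Theory Num.Theory.
Local Open Scope ring_scope.

(* The fiber of e_(2k+1) consists of two k-cubes {0,1}^k, one for each of the
   two sides of A_k (x_(4k) = 1 or x_(4k+1) = 1).  The reduced lex Groebner
   basis consists of the binomials x_i - x_(k+i) and x_(2k+i) - x_(3k+i),
   which flip one coordinate inside a cube, and a single binomial joining the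
   all-ones vertices of the two cubes.  That their leading terms generate the
   initial ideal follows from a monomial grading under which the remaining
   (standard) monomials are lex-minimal in their degree.  Conversely, if a
   move of the reduced basis is nonzero at a variable x_j that is the leading
   term of a flip binomial, reducedness forces its positive part to divide
   x_j; this rules out all other moves between fiber points.  So the fiber
   graph is two k-cubes joined by one bridge: its edge-connectivity is 1 and
   every vertex has degree k, except the two ends of the bridge. *)

Lemma clos_rt_sym (T : Type) (R : T -> T -> Prop) :
  (forall a b, R a b -> R b a) -> forall a b, clos_refl_trans T R a b -> clos_refl_trans T R b a.
Proof.
move=> symR a b; elim=> [x y /symR|x|x y z _ yx _ zy]; [exact: rt_step|exact: rt_refl|].
exact: rt_trans zy yx.
Qed.

(** * Binomials and reduced Groebner bases *)

Section ToricBinomials.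
Variables (K : fieldType) (n : nat).
Implicit Types (u w : 'cV[int]_n) (m : 'X_{1..n}).

Lemma lex_lt_asym m m' : lex_lt m m' -> ~ lex_lt m' m.
Proof.
move=> [i [eq_i lt_i]] [j [eq_j lt_j]].
case: (ltngtP i j) => [ij|ji|/ord_inj ij].
- by move: lt_i; rewrite (eq_j _ ij) ltnn.
- by move: lt_j; rewrite (eq_i _ ji) ltnn.
- by move: lt_j; rewrite -ij => /(ltn_trans lt_i); rewrite ltnn.
Qed.

Lemma is_lead_uniq (p : {mpoly K[n]}) m1 m2 : is_lead p m1 -> is_lead p m2 -> m1 = m2.
Proof.
move=> [p_m1 max_m1] [p_m2 max_m2].
case: (max_m1 _ p_m2) => [//|lt21]; case: (max_m2 _ p_m1) => [//|lt12].
by case: (lex_lt_asym lt21 lt12).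
Qed.

(* [binom u] has leading term x^(u+) *)
Definition lex_positive u : Prop := lex_lt (negp u) (posp u).

Lemma pospE u i : (posp u i)%:Z = Num.max (u i 0) 0.
Proof. by rewrite mnmE gez0_abs // le_max lexx orbT. Qed.

Lemma negpE u i : (negp u i)%:Z = Num.max (- u i 0) 0.
Proof. by rewrite mnmE gez0_abs // le_max lexx orbT. Qed.

Lemma pospB_negp u i : (posp u i)%:Z - (negp u i)%:Z = u i 0.
Proof.
rewrite pospE negpE; case: (lerP 0 (u i 0)) => u_i.
- by rewrite max_r ?subr0 // oppr_le0.
- by rewrite max_l ?sub0r ?opprK // oppr_ge0 ltW.
Qed.

Lemma posp_eq1 u i : u i 0 = 1 -> posp u i = 1%N.
Proof. by move=> u_i; apply/eqP; rewrite -eqz_nat pospE u_i max_l. Qed.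

Lemma posp_eq0 u i : u i 0 <= 0 -> posp u i = 0%N.
Proof. by move=> u_i; apply/eqP; rewrite -eqz_nat pospE max_r. Qed.

Lemma negp_eq0 u i : 0 <= u i 0 -> negp u i = 0%N.
Proof. by move=> u_i; apply/eqP; rewrite -eqz_nat negpE max_r // oppr_le0. Qed.

Lemma lex_positive_neq u : lex_positive u -> posp u != negp u.
Proof.
move=> lt_u; apply/eqP => eq_u; move: lt_u; rewrite /lex_positive eq_u => lt_n.
exact: (lex_lt_asym lt_n lt_n).
Qed.

Lemma posp_eq_negp u : (posp u == negp u) = (u == 0).
Proof.
apply/eqP/eqP => [pn|->].
  by apply/matrixP => i j; rewrite (ord1 j) -pospB_negp pn subrr mxE.
by apply/mnmP => i; apply/eqP; rewrite -eqz_nat pospE negpE mxE oppr0.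
Qed.

Lemma lex_positive_first u (j : 'I_n) :
  (forall l : 'I_n, (l < j)%N -> u l 0 = 0) -> 0 < u j 0 -> lex_positive u.
Proof.
move=> u_l u_j; exists j; split=> [l lt_l|]; first by rewrite posp_eq0 ?negp_eq0 ?u_l.
by rewrite negp_eq0 ?ltW // -(ltz_nat 0) pospE max_l ?ltW.
Qed.

Lemma mdivides_mnm1 (j : 'I_n) m : mdivides U_(j)%MM m <-> (0 < m j)%N.
Proof.
split=> [/(_ j)|m_j l]; first by rewrite mnm1E eqxx.
by rewrite mnm1E; case: eqP => // <-.
Qed.

Lemma mcoeff_binom u m : (binom K u)@_m = (posp u == m)%:R - (negp u == m)%:R.
Proof. by rewrite mcoeffB !mcoeffX. Qed.

Lemma binom0 : binom K (0 : 'cV_n) = 0.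
Proof. by rewrite /binom (_ : posp 0 = negp 0) ?subrr //; apply/eqP; rewrite posp_eq_negp. Qed.

Lemma msupp_binom u m : posp u != negp u ->
  (m \in msupp (binom K u)) = (m == posp u) || (m == negp u).
Proof.
move=> pn; rewrite mcoeff_msupp mcoeff_binom ![_ == m]eq_sym.
case: (eqVneq m (posp u)) => [->|_]; first by rewrite (negbTE pn) subr0 oner_eq0.
case: (eqVneq m (negp u)) => [_|_]; first by rewrite sub0r oppr_eq0 oner_eq0.
by rewrite subrr eqxx.
Qed.

Lemma binom_lead u : lex_positive u -> is_lead (binom K u) (posp u).
Proof.
move=> lt_u; have pn := lex_positive_neq lt_u.
split=> [|m']; rewrite msupp_binom // ?eqxx //.
by case/orP=> /eqP ->; [left|right].
Qed.

Lemma binom_neq0 u : lex_positive u -> binom K u != 0.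
Proof. by move=> /binom_lead [+ _]; apply: contraTneq => ->; rewrite msupp0. Qed.

Lemma mcoeff_binom_lead u : lex_positive u -> (binom K u)@_(posp u) = 1.
Proof.
by move=> /lex_positive_neq pn; rewrite mcoeff_binom eqxx eq_sym (negbTE pn) subr0.
Qed.

Section Toric.
Variables (d : nat) (A : 'M[int]_(d, n)).

Lemma fiber_sub_kernel b u v : fiber A b u -> fiber A b v -> in_kernel A (u - v).
Proof. by move=> [_ Au] [_ Av]; rewrite /in_kernel mulmxBr Au Av subrr. Qed.

Lemma binom_toric u : in_kernel A u -> toric_ideal A (binom K u).
Proof.
by move=> Au; exists [:: (1, u)]; split=> [x /[!inE] /eqP ->|]; rewrite ?big_seq1 ?mul1r.
Qed.

(* Some basis element has leading term dividing x^(w0+); by reducedness it can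
   only be [binom w]. *)
Lemma rgb_lead_dvd G w w0 m :
  reduced_groebner_basis (@toric_ideal K _ _ A) G ->
  binom K w \in G -> is_lead (binom K w) (posp w) ->
  in_kernel A w0 -> lex_positive w0 ->
  m \in msupp (binom K w) -> mdivides (posp w0) m -> mdivides (posp w) (posp w0).
Proof.
move=> [_ init_G _ red_G] Gw lead_w Aw0 lt_w0 w_m dvd_m.
have [g [mg [Gg lead_g dvd_g]]] :=
  init_G _ (binom_toric Aw0) (binom_neq0 lt_w0) _ (binom_lead lt_w0).
case: (eqVneq g (binom K w)) => [eq_g|neq_g].
  by move: lead_g; rewrite eq_g => /(is_lead_uniq lead_w) ->.
by case: (red_G _ _ _ Gg Gw neq_g lead_g _ w_m) => i; apply: leq_trans (dvd_g i) (dvd_m i).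
Qed.

Lemma fiber_adj_sym u v : fiber_adj (R_lex K A) u v -> fiber_adj (R_lex K A) v u.
Proof. by move=> [neq_uv R_uv]; split; [move/esym|rewrite or_comm]. Qed.

Lemma R_lex_neq0 w : R_lex K A w -> w != 0.
Proof.
move=> [G [[nz_G _ _ _] [Gw _]]]; apply: contraTneq Gw => ->.
by rewrite binom0; apply/negP => /nz_G [_ /eqP].
Qed.

Lemma fiber_adj_R_lex u v : R_lex K A (u - v) -> fiber_adj (R_lex K A) u v.
Proof.
move=> R_uv; split=> [eq_uv|]; last by left.
by move: (R_lex_neq0 R_uv); rewrite eq_uv subrr eqxx.
Qed.

(* The positive part of [w] divides x_j: apply [rgb_lead_dvd] to the term of
   [binom w] containing x_j. *)
Lemma R_lex_posp_le1 w w0 (j : 'I_n) :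
  R_lex K A w -> in_kernel A w0 -> lex_positive w0 -> posp w0 = U_(j)%MM ->
  w j 0 != 0 -> forall l, (posp w l <= (j == l))%N.
Proof.
move=> Rw Aw0 lt_w0 pw0 wj l; have [G [rgb [Gw lead_w]]] := Rw.
have pn : posp w != negp w by rewrite posp_eq_negp (R_lex_neq0 Rw).
pose m := if 0 < w j 0 then posp w else negp w.
have w_m : m \in msupp (binom K w).
  by rewrite (msupp_binom _ pn) /m; case: ifP; rewrite eqxx ?orbT.
have dvd_m : mdivides (posp w0) m.
  move=> i; rewrite pw0 mnm1E; case: eqP => [<-|_] //; rewrite /m.
  case: ifP => wj_pos; rewrite -(ltz_nat 0) ?pospE ?negpE; lia.
by have := rgb_lead_dvd rgb Gw lead_w Aw0 lt_w0 w_m dvd_m l; rewrite pw0 mnm1E.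
Qed.

(* The second hypothesis gives every leading term a variable that no other
   move involves, which makes the basis reduced. *)
Lemma binomials_rgb (W : seq 'cV[int]_n) :
  (forall w, w \in W -> in_kernel A w /\ lex_positive w) ->
  (forall w, w \in W -> exists2 j, (0 < posp w j)%N &
     forall w', w' \in W -> w' j 0 != 0 -> w' = w) ->
  (forall (f : {mpoly K[n]}) mf, toric_ideal A f -> is_lead f mf ->
     exists2 w, w \in W & mdivides (posp w) mf) ->
  reduced_groebner_basis (@toric_ideal K _ _ A) (map (@binom K n) W).
Proof.
move=> W_ok W_private W_init; split.
- move=> _ /mapP [w Ww ->]; have [Aw lt_w] := W_ok w Ww.
  by split; [apply: binom_toric | apply: binom_neq0].
- move=> f If _ mf lead_f; have [w Ww dvd_w] := W_init f mf If lead_f.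
  exists (binom K w), (posp w); split=> //; first exact: map_f.
  exact/binom_lead/(W_ok w Ww).2.
- move=> _ mg /mapP [w Ww ->] lead_g; have lt_w := (W_ok w Ww).2.
  by rewrite -(is_lead_uniq (binom_lead lt_w) lead_g) mcoeff_binom_lead.
- move=> _ _ mg /mapP [w Ww ->] /mapP [w' Ww' ->] neq_ww' lead_g m w'_m dvd_m.
  have lt_w := (W_ok w Ww).2; have lt_w' := (W_ok w' Ww').2.
  move: lead_g dvd_m => /(is_lead_uniq (binom_lead lt_w)) <- dvd_m.
  have [j pos_j priv_j] := W_private w Ww.
  have m_j : (0 < m j)%N := leq_trans pos_j (dvd_m j).
  suff w'_j : w' j 0 != 0 by move: neq_ww'; rewrite (priv_j w' Ww' w'_j) eqxx.
  apply: contraTneq m_j => w'_j0; move: w'_m.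
  rewrite (msupp_binom _ (lex_positive_neq lt_w')) => /orP [] /eqP ->.
    by rewrite posp_eq0 ?w'_j0.
  by rewrite negp_eq0 ?w'_j0.
Qed.

End Toric.
End ToricBinomials.

(** * Monomial maps *)

Section MonomialMap.
Variables (K : fieldType) (n N : nat) (deg : 'I_n -> 'X_{1..N}).

Definition mdegree (m : 'X_{1..n}) : 'X_{1..N} := (\sum_(j < n) deg j *+ m j)%MM.

Definition monomial_map (p : {mpoly K[n]}) : {mpoly K[N]} :=
  mmap (@mpolyC N K) (fun j => 'X_[deg j]) p.

Lemma mdegreeE m l : mdegree m l = (\sum_(j < n) deg j l * m j)%N.
Proof. by rewrite mnm_sumE; apply: eq_bigr => j _; rewrite mulmnE. Qed.

Lemma monomial_mapX m : monomial_map 'X_[m] = 'X_[mdegree m].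
Proof. by rewrite /monomial_map mmapX /mmap1 mprodXnE. Qed.

Lemma mcoeff_monomial_map p mu :
  (monomial_map p)@_mu = \sum_(m <- msupp p) p@_m * (mdegree m == mu)%:R.
Proof.
rewrite /monomial_map /mmap (big_morph (mcoeff mu) (mcoeffD mu) (mcoeff0 _ mu)).
by apply: eq_bigr => m _; rewrite /mmap1 mprodXnE mcoeffCM mcoeffX.
Qed.

Lemma monomial_map_toric d (A : 'M[int]_(d, n)) f :
  (forall w, in_kernel A w -> mdegree (posp w) = mdegree (negp w)) ->
  toric_ideal A f -> monomial_map f = 0.
Proof.
move=> deg_ker [s [ker_s ->]].
have mapD : {morph monomial_map : p q / p + q} by move=> p q; apply: rmorphD.
have mapB : {morph monomial_map : p q / p - q} by move=> p q; apply: rmorphB.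
have mapM : {morph monomial_map : p q / p * q} by move=> p q; apply: rmorphM.
rewrite (big_morph _ mapD (rmorph0 _)) big_seq big1 // => x s_x.
by rewrite mapM mapB !monomial_mapX (deg_ker _ (ker_s _ s_x)) subrr mulr0.
Qed.

Lemma monomial_map_neq0 f mf : mf \in msupp f ->
  (forall m, m \in msupp f -> mdegree m = mdegree mf -> m = mf) ->
  monomial_map f != 0.
Proof.
move=> f_mf uniq_mf; apply/eqP => f0.
have coef_mf : (monomial_map f)@_(mdegree mf) = f@_mf.
  rewrite mcoeff_monomial_map (bigD1_seq mf) ?msupp_uniq //= (eqxx (mdegree mf)) mulr1.
  rewrite big_seq_cond big1 ?addr0 // => m /andP [f_m neq_m].
  case: eqP => [/(uniq_mf _ f_m) eq_m|_]; last by rewrite mulr0.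
  by rewrite eq_m eqxx in neq_m.
by move: f_mf; rewrite mcoeff_msupp -coef_mf f0 mcoeff0 eqxx.
Qed.

End MonomialMap.

(** * The matrix A_k *)

Ltac decide_nat_tests := repeat match goal with
  | |- context [ (?a == ?b) ] => let T := type of a in unify T nat;
      first [ have ->: (a == b) = true by apply/eqP; lia
            | have ->: (a == b) = false by apply/eqP; lia
            | case: (@eqP nat a b) => ? ]
  | |- context [ (?a < ?b)%N ] =>
      first [ have ->: (a < b)%N = true by lia
            | have ->: (a < b)%N = false by lia
            | case: (ltnP a b) => ? ]
  end.

Section Ak.
Variable k : nat.
Hypothesis k_gt0 : (0 < k)%N.

Local Notation n := (4 * k + 2)%N.
Local Notation N := (2 * k + 1)%N.

Fact n_gt0 : (0 < n)%N. Proof. by rewrite addn2. Qed.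
Fact N_gt0 : (0 < N)%N. Proof. by rewrite addn1. Qed.

(* [ix j] is the column j, and column 0 when j >= n. *)
Definition ix (j : nat) : 'I_n := insubd (Ordinal n_gt0) j.
Definition rx (r : nat) : 'I_N := insubd (Ordinal N_gt0) r.

Lemma ixK j : (j < n)%N -> val (ix j) = j.
Proof. by move=> lt_j; rewrite val_insubd lt_j. Qed.

Lemma rxK r : (r < N)%N -> val (rx r) = r.
Proof. by move=> lt_r; rewrite val_insubd lt_r. Qed.

Lemma ix_val (j : 'I_n) : ix j = j.
Proof. by apply: val_inj; rewrite ixK. Qed.

Local Notation coord w j := (w (ix j) 0).

Lemma coordB (u v : 'cV[int]_n) j : coord (u - v) j = coord u j - coord v j.
Proof. by rewrite !mxE. Qed.

Lemma big_ix_supp (R : Type) (idx : R) (op : Monoid.com_law idx) (S : seq nat)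
    (F : 'I_n -> R) :
  uniq S -> all (fun a => a < n)%N S ->
  (forall j : 'I_n, val j \notin S -> F j = idx) ->
  \big[op/idx]_(j < n) F j = \big[op/idx]_(a <- S) F (ix a).
Proof.
move=> uniq_S /allP S_n F_out.
have uniq_ixS : uniq (map ix S).
  rewrite map_inj_in_uniq // => a b /S_n /ixK + /S_n /ixK => + + eq_ab.
  by rewrite eq_ab => ->.
rewrite -(big_map ix predT) [RHS](big_uniq _ uniq_ixS) [RHS]big_mkcond.
apply: eq_bigr => j _; case: ifP => // /negbT j_out.
apply: F_out; apply: contra j_out => S_j; apply/mapP; exists (val j) => //.
by rewrite ix_val.
Qed.

(* Side [s] of A_k: the rows [rowB s i] read x_(colL s i) + x_(colR s i) = x_(colS s). *)
Definition colL (s : bool) (i : nat) : nat := ((if s then 0 else 2 * k) + i)%N.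
Definition colR (s : bool) (i : nat) : nat := (colL s i + k)%N.
Definition colS (s : bool) : nat := (if s then 4 * k else (4 * k).+1)%N.
Definition rowB (s : bool) (i : nat) : nat := ((if s then 0 else k) + i)%N.

Variant col_spec (j : nat) : Prop :=
  | ColL s i of (i < k)%N & j = colL s i
  | ColR s i of (i < k)%N & j = colR s i
  | ColS s of j = colS s.

Lemma colP j : (j < n)%N -> col_spec j.
Proof.
move=> lt_j.
case: (ltnP j k) => [j_k|k_j]; first by apply: (@ColL _ true j).
case: (ltnP j (2 * k)%N) => [j_2k|k2_j].
  by apply: (@ColR _ true (j - k)); rewrite /colR /colL /=; lia.
case: (ltnP j (3 * k)%N) => [j_3k|k3_j].
  by apply: (@ColL _ false (j - 2 * k)%N); rewrite /colL /=; lia.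
case: (ltnP j (4 * k)%N) => [j_4k|k4_j].
  by apply: (@ColR _ false (j - 3 * k)%N); rewrite /colR /colL /=; lia.
case: (ltnP j (4 * k)%N.+1) => ?; [apply: (@ColS _ true)|apply: (@ColS _ false)];
  by rewrite /colS; lia.
Qed.

Variant row_spec (r : 'I_N) : Prop :=
  | RowB s i of (i < k)%N & r = rx (rowB s i)
  | RowLast of r = rx (2 * k)%N.

Lemma rowP r : row_spec r.
Proof.
have lt_r := ltn_ord r.
have rxE a : (a < N)%N -> r = a :> nat -> r = rx a.
  by move=> lt_a eq_a; apply: val_inj; rewrite rxK.
case: (ltnP r k) => [r_k|k_r].
  by apply: (@RowB _ true r) => //; apply: rxE; rewrite /rowB /=; lia.
case: (ltnP r (2 * k)%N) => [r_2k|k2_r].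
  by apply: (@RowB _ false (r - k)); [lia|apply: rxE; rewrite /rowB /=; lia].
by apply: RowLast; apply: rxE; lia.
Qed.

Lemma mulmx_Ak_row (w : 'cV[int]_n) s i : (i < k)%N ->
  (Ak k *m w) (rx (rowB s i)) 0 =
  coord w (colL s i) + coord w (colR s i) - coord w (colS s).
Proof.
move=> lt_i; rewrite mxE (@big_ix_supp _ _ _ [:: colL s i; colR s i; colS s]).
- rewrite !big_cons big_nil !mxE !rxK ?ixK /rowB /colR /colL /colS; try (case: s; lia).
  by case: s => /=; decide_nat_tests => /=; rewrite !mul1r mulN1r addr0 addrA.
- by rewrite /= /colR /colL /colS; case: s; rewrite /= ?inE; lia.
- by rewrite /= /colR /colL /colS; case: s; lia.
- move=> j; rewrite !inE !mxE rxK /rowB /colR /colL /colS; last by case: s; lia.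
  by case: s => /=; decide_nat_tests; rewrite ?mul0r.
Qed.

Lemma mulmx_Ak_last (w : 'cV[int]_n) :
  (Ak k *m w) (rx (2 * k)%N) 0 = coord w (colS true) + coord w (colS false).
Proof.
rewrite mxE (@big_ix_supp _ _ _ [:: colS true; colS false]) /colS.
- rewrite !big_cons big_nil !mxE !rxK ?ixK; try lia.
  by decide_nat_tests => /=; rewrite !mul1r addr0.
- by rewrite /= inE; lia.
- by rewrite /=; lia.
- by move=> j; rewrite !inE !mxE rxK //; decide_nat_tests; rewrite ?mul0r.
Qed.

(* The fiber of e_(2k+1) consists of the vertices [vert s f]: x_(colS s) = 1
   and, for i < k, x_(colR s i) = f i, x_(colL s i) = ~~ f i; all other
   coordinates vanish. *)
Definition vcoord (s : bool) (f : nat -> bool) (j : nat) : bool :=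
  (if j < k then s && ~~ f j
   else if j < 2 * k then s && f (j - k)
   else if j < 3 * k then ~~ s && ~~ f (j - 2 * k)
   else if j < 4 * k then ~~ s && f (j - 3 * k)
   else if j == 4 * k then s else ~~ s)%N.

Definition vert (s : bool) (f : nat -> bool) : 'cV[int]_n :=
  \col_(j < n) (vcoord s f j)%:Z.

Lemma vert_colL s s' f i : (i < k)%N ->
  coord (vert s f) (colL s' i) = ((s == s') && ~~ f i)%:Z.
Proof.
move=> lt_i; rewrite mxE ixK /vcoord /colL; last by case: s'; lia.
case: s' => /=; decide_nat_tests; first by rewrite add0n eqb_id.
by rewrite addKn eqbF_neg.
Qed.

Lemma vert_colR s s' f i : (i < k)%N ->
  coord (vert s f) (colR s' i) = ((s == s') && f i)%:Z.
Proof.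
move=> lt_i; rewrite mxE ixK /vcoord /colR /colL; last by case: s'; lia.
case: s' => /=; decide_nat_tests; first by rewrite add0n addnK eqb_id.
by rewrite eqbF_neg (_ : 2 * k + i + k - 3 * k = i)%N //; lia.
Qed.

Lemma vert_colS s s' f : coord (vert s f) (colS s') = (s == s')%:Z.
Proof.
rewrite mxE ixK /vcoord /colS; last by case: s'; lia.
by case: s' => /=; decide_nat_tests; rewrite ?eqb_id ?eqbF_neg.
Qed.

Lemma vert_ext s f g : (forall i, (i < k)%N -> f i = g i) -> vert s f = vert s g.
Proof.
move=> eq_fg; apply/matrixP => j c; rewrite (ord1 c) -(ix_val j).
case: (colP (ltn_ord j)) => [s' i lt_i ->|s' i lt_i ->|s' ->];
  by rewrite ?vert_colL ?vert_colR ?vert_colS ?eq_fg.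
Qed.

Local Notation V := (fiber (Ak k) (e_last k)).

Lemma fiber_vert s f : V (vert s f).
Proof.
split=> [j|]; first by rewrite mxE.
apply/matrixP => r c; rewrite (ord1 c) [RHS]mxE.
case: (rowP r) => [s' i lt_i ->|->].
- rewrite mulmx_Ak_row // vert_colL // vert_colR // vert_colS rxK /rowB; last by case: s'; lia.
  by case: s'; case: s; case: (f i) => /=; decide_nat_tests.
- rewrite mulmx_Ak_last !vert_colS rxK; try lia.
  by decide_nat_tests; case: s.
Qed.

Lemma fiber_vertP u : V u -> exists s f, u = vert s f.
Proof.
move=> [u_ge0 Au].
have row_eq s i : (i < k)%N -> coord u (colL s i) + coord u (colR s i) = coord u (colS s).
  move=> lt_i; move/matrixP: Au => /(_ (rx (rowB s i)) ord0).
  rewrite mulmx_Ak_row // mxE rxK /rowB; last by case: s; lia.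
  by case: s => /=; decide_nat_tests; lia.
have last_eq : coord u (colS true) + coord u (colS false) = 1.
  move/matrixP: Au => /(_ (rx (2 * k)%N) ord0).
  by rewrite mulmx_Ak_last mxE rxK //; decide_nat_tests.
have [s side_s] : exists s : bool, coord u (colS true) = s%:Z /\ coord u (colS false) = (~~ s)%:Z.
  have := u_ge0 (ix (colS true)); have := u_ge0 (ix (colS false)).
  case: (eqVneq (coord u (colS true)) 0) => u_s; [exists false|exists true];
    by rewrite /nat_of_bool /negb; lia.
exists s, (fun i => coord u (colR s i) == 1).
apply/matrixP => j c; rewrite (ord1 c) -(ix_val j).
case: (colP (ltn_ord j)) => [s' i lt_i ->|s' i lt_i ->|s' ->];
  rewrite ?vert_colL ?vert_colR ?vert_colS //.
- have := row_eq s' i lt_i; have := u_ge0 (ix (colL s' i)); have := u_ge0 (ix (colR s' i)).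
  by case: s s' side_s => [] [] /= [u_t u_f]; try case: eqP => /=; lia.
- have := row_eq s' i lt_i; have := u_ge0 (ix (colL s' i)); have := u_ge0 (ix (colR s' i)).
  by case: s s' side_s => [] [] /= [u_t u_f]; try case: eqP => /=; lia.
- by case: s s' side_s => [] [] /= [u_t u_f].
Qed.

(** * The reduced lex Groebner basis of A_k *)

Definition flip (f : nat -> bool) (i : nat) : nat -> bool := fun j => (j == i) (+) f j.

Lemma flipK f i : flip (flip f i) i =1 f.
Proof. by move=> j; rewrite /flip addbA addbb. Qed.

Definition flip_move (s : bool) (i : nat) : 'cV[int]_n :=
  \col_(j < n) ((j == colL s i :> nat)%:Z - (j == colR s i :> nat)%:Z).

Definition cross_move : 'cV[int]_n := vert true xpredT - vert false xpredT.

Lemma flip_move_coord s i j : (j < n)%N ->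
  coord (flip_move s i) j = (j == colL s i)%:Z - (j == colR s i)%:Z.
Proof. by move=> lt_j; rewrite mxE ixK. Qed.

Lemma vert_sub_flip s f i : (i < k)%N -> ~~ f i ->
  vert s f - vert s (flip f i) = flip_move s i.
Proof.
move=> lt_i f_i; apply/matrixP => j c; rewrite (ord1 c) -(ix_val j).
rewrite coordB flip_move_coord //.
case: (colP (ltn_ord j)) => [s' i' lt_i' ->|s' i' lt_i' ->|s' ->];
  rewrite ?vert_colL ?vert_colR ?vert_colS // /flip /colR /colL /colS;
  case: s s' => [] [] /=; decide_nat_tests; try subst i';
  by rewrite /= ?(negbTE f_i) //; case: (f _).
Qed.

Lemma cross_move_colL s i : (i < k)%N -> coord cross_move (colL s i) = 0.
Proof. by move=> lt_i; rewrite coordB !vert_colL //; case: s. Qed.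

Lemma cross_move_colR s i : (i < k)%N -> coord cross_move (colR s i) = if s then 1 else -1.
Proof. by move=> lt_i; rewrite coordB !vert_colR //; case: s. Qed.

Lemma cross_move_colS s : coord cross_move (colS s) = if s then 1 else -1.
Proof. by rewrite coordB !vert_colS; case: s. Qed.

Definition lex_moves : seq 'cV[int]_n :=
  cross_move :: [seq flip_move s i | s <- [:: true; false], i <- iota 0 k].

Variant lex_move_spec (w : 'cV[int]_n) : Prop :=
  | MoveCross of w = cross_move
  | MoveFlip s i of (i < k)%N & w = flip_move s i.

Lemma lex_movesP w : w \in lex_moves -> lex_move_spec w.
Proof.
rewrite inE => /orP [/eqP ->|/allpairsP [[s i] [_ /= + ->]]]; first exact: MoveCross.
by rewrite mem_iota add0n => lt_i; apply: MoveFlip lt_i _.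
Qed.

Lemma flip_move_lex_moves s i : (i < k)%N -> flip_move s i \in lex_moves.
Proof.
move=> lt_i; rewrite inE; apply/orP; right; apply/allpairsP.
by exists (s, i); rewrite /= mem_iota; case: s.
Qed.

Lemma lex_moves_kernel w : w \in lex_moves -> in_kernel (Ak k) w.
Proof.
case/lex_movesP => [->|s i lt_i ->]; first exact/fiber_sub_kernel/fiber_vert/fiber_vert.
by rewrite -(@vert_sub_flip s xpred0) //; apply/fiber_sub_kernel/fiber_vert/fiber_vert.
Qed.

Lemma posp_flip_move s i : (i < k)%N -> posp (flip_move s i) = U_(ix (colL s i))%MM.
Proof.
move=> lt_i; apply/mnmP => l; rewrite mnm1E -(ix_val l).
have lt_c : (colL s i < n)%N by rewrite /colL; case: s; lia.
case: (eqVneq (ix (colL s i)) (ix l)) => [<-|neq_l].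
  rewrite posp_eq1 // flip_move_coord // eqxx (_ : _ == _ = false) //.
  by apply/eqP; rewrite /colR; lia.
rewrite posp_eq0 // flip_move_coord //.
have /negbTE -> : val l != colL s i by apply: contra_neq neq_l => <-; rewrite ix_val.
by rewrite sub0r oppr_le0.
Qed.

Lemma lex_moves_positive w : w \in lex_moves -> lex_positive w.
Proof.
case/lex_movesP => [->|s i lt_i ->].
  have lt_k : (k < n)%N by lia.
  apply: (@lex_positive_first _ _ (ix k)) => [l|].
    by rewrite ixK // => lt_l; rewrite -(ix_val l) -[val l]/(colL true l) cross_move_colL.
  by rewrite -[k]/(colR true 0) cross_move_colR.
have lt_c : (colL s i < n)%N by rewrite /colL; case: s; lia.
apply: (@lex_positive_first _ _ (ix (colL s i))) => [l|].
  by rewrite ixK // => lt_l; rewrite -(ix_val l) flip_move_coord // /colR; decide_nat_tests.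
by rewrite flip_move_coord // eqxx /colR; decide_nat_tests.
Qed.

Lemma lex_moves_private w : w \in lex_moves -> exists2 j, (0 < posp w j)%N &
  forall w', w' \in lex_moves -> w' j 0 != 0 -> w' = w.
Proof.
case/lex_movesP => [->|s i lt_i ->].
  exists (ix (colS true)); first by rewrite posp_eq1 ?cross_move_colS.
  move=> _ /lex_movesP [->|s i lt_i ->] // /eqP []; rewrite flip_move_coord /colS /colR /colL;
    by case: s; decide_nat_tests.
exists (ix (colL s i)); first by rewrite posp_flip_move // mnm1E eqxx.
move=> _ /lex_movesP [->|s' i' lt_i' ->]; first by rewrite cross_move_colL ?eqxx.
rewrite flip_move_coord /colR /colL; last by case: s; lia.
by case: s s' => [] [] /=; decide_nat_tests => //= _; congr flip_move; lia.
Qed.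

Definition standard (m : 'X_{1..n}) : Prop :=
  forall w, w \in lex_moves -> ~ mdivides (posp w) m.

Lemma standard_colL m s i : standard m -> (i < k)%N -> m (ix (colL s i)) = 0%N.
Proof.
move=> std lt_i; apply/eqP; rewrite -leqn0 leqNgt; apply/negP => pos.
by apply: (std _ (flip_move_lex_moves s lt_i)); rewrite posp_flip_move //; apply/mdivides_mnm1.
Qed.

Lemma standard_cross m : standard m -> (0 < m (ix (colS true)))%N ->
  ~ (forall i, (i < k)%N -> (0 < m (ix (colR true i)))%N).
Proof.
move=> std m_S m_R; apply: (std _ (mem_head _ _)) => l; rewrite -(ix_val l).
case: (colP (ltn_ord l)) => [s i lt_i ->|[] i lt_i ->|[] ->].
- by rewrite posp_eq0 ?cross_move_colL.
- by rewrite posp_eq1 ?cross_move_colR ?m_R.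
- by rewrite posp_eq0 ?cross_move_colR.
- by rewrite posp_eq1 ?cross_move_colS.
- by rewrite posp_eq0 ?cross_move_colS.
Qed.

(* The rows of A_k with the last row added to each of the others: a
   nonnegative matrix whose kernel contains ker A_k, used as a grading. *)
Definition deg (j : 'I_n) : 'X_{1..N} :=
  [multinom nat_of_bool (let j := val j in
     if r < k then [|| j == colL true r, j == colR true r | j == colS false]
     else if r < 2 * k then
       [|| j == colL false (r - k), j == colR false (r - k) | j == colS true]
     else (j == colS true) || (j == colS false))%N | r < N].

Lemma mdegree_row m s i : (i < k)%N -> mdegree deg m (rx (rowB s i)) =
  (m (ix (colL s i)) + m (ix (colR s i)) + m (ix (colS (~~ s))))%N.
Proof.
move=> lt_i; rewrite mdegreeE (@big_ix_supp _ _ _ [:: colL s i; colR s i; colS (~~ s)]).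
- rewrite !big_cons big_nil !mnmE !rxK ?ixK /rowB /colR /colL /colS; try (case: s => /=; lia).
  by case: s => /=; decide_nat_tests => /=; lia.
- by case: s; rewrite /= /colR /colL /colS ?inE /=; lia.
- by case: s; rewrite /= /colR /colL /colS /=; lia.
- move=> j; rewrite !inE /deg mnmE rxK /rowB /colR /colL /colS; last by case: s; lia.
  by case: s => /=; decide_nat_tests.
Qed.

Lemma mdegree_last m :
  mdegree deg m (rx (2 * k)%N) = (m (ix (colS true)) + m (ix (colS false)))%N.
Proof.
rewrite mdegreeE (@big_ix_supp _ _ _ [:: colS true; colS false]) /colS.
- rewrite !big_cons big_nil !mnmE !rxK ?ixK; try lia.
  by decide_nat_tests => /=; lia.
- by rewrite /= inE; lia.
- by rewrite /=; lia.
- by move=> j; rewrite !inE /deg mnmE rxK //; decide_nat_tests.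
Qed.

Lemma mdegree_kernel w :
  in_kernel (Ak k) w -> mdegree deg (posp w) = mdegree deg (negp w).
Proof.
move=> /matrixP Aw; have PN j := pospB_negp w (ix j).
have last_eq := Aw (rx (2 * k)%N) 0; rewrite mulmx_Ak_last mxE in last_eq.
apply/mnmP => r; case: (rowP r) => [s i lt_i ->|->]; apply/eqP; rewrite -eqz_nat.
  have row_eq := Aw (rx (rowB s i)) 0; rewrite mulmx_Ak_row // mxE in row_eq.
  have := PN (colL s i); have := PN (colR s i); have := PN (colS (~~ s)).
  by rewrite !mdegree_row // !PoszD; case: s last_eq row_eq => /=; lia.
by have := PN (colS true); have := PN (colS false); rewrite !mdegree_last !PoszD; lia.
Qed.

Lemma lex_lt_first_block (m m' : 'X_{1..n}) s :
  (forall j, (j < colL s 0)%N -> m' (ix j) = m (ix j)) ->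
  (forall i, (i < k)%N -> m' (ix (colL s i)) = 0%N) ->
  (exists2 i, (i < k)%N & (0 < m (ix (colL s i)))%N) -> lex_lt m' m.
Proof.
move=> eq_lo m'0 [i0 lt_i0 pos_i0].
have /ex_minnP [i /andP [lt_i pos_i] min_i] :
  exists i, (i < k)%N && (0 < m (ix (colL s i)))%N by exists i0; rewrite lt_i0.
have lt_c j : (j < k)%N -> (colL s j < n)%N by rewrite /colL; case: (s); lia.
exists (ix (colL s i)); split; last by rewrite m'0.
move=> l; rewrite ixK ?lt_c // => lt_l; rewrite -(ix_val l).
case: (ltnP l (colL s 0)) => [|le_l]; first exact: eq_lo.
have -> : (l : nat) = colL s (l - colL s 0) by move: le_l; rewrite /colL; case: (s) => /=; lia.
have lt_li : (l - colL s 0 < i)%N by move: lt_l le_l; rewrite /colL; case: (s) => /=; lia.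
rewrite m'0; last lia.
case: (posnP (m (ix (colL s (l - colL s 0))))) => // pos.
by have := min_i _ (introT andP (conj (ltn_trans lt_li lt_i) pos)); rewrite leqNgt lt_li.
Qed.

Lemma colL_zero_or_pos (m : 'X_{1..n}) s :
  (forall i, (i < k)%N -> m (ix (colL s i)) = 0%N) \/
  exists2 i, (i < k)%N & (0 < m (ix (colL s i)))%N.
Proof.
have [/existsP [i pos_i]|no_pos] := boolP [exists i : 'I_k, 0 < m (ix (colL s i))]%N.
  by right; exists i.
left=> i lt_i; apply/eqP; rewrite -leqn0 leqNgt; apply: contra no_pos => pos.
by apply/existsP; exists (Ordinal lt_i).
Qed.

Lemma standard_lex_min m m' : mdegree deg m = mdegree deg m' -> m != m' ->
  standard m' -> lex_lt m' m.
Proof.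
move=> eq_deg neq_m std.
have rowE s i : (i < k)%N ->
    (m (ix (colL s i)) + m (ix (colR s i)) + m (ix (colS (~~ s))) =
     m' (ix (colL s i)) + m' (ix (colR s i)) + m' (ix (colS (~~ s))))%N.
  by move=> lt_i; rewrite -!mdegree_row // eq_deg.
have lastE : (m (ix (colS true)) + m (ix (colS false)) =
    m' (ix (colS true)) + m' (ix (colS false)))%N by rewrite -!mdegree_last eq_deg.
have m'L s i : (i < k)%N -> m' (ix (colL s i)) = 0%N := @standard_colL m' s i std.
case: (colL_zero_or_pos m true) => [mL|pos]; last first.
  by apply: lex_lt_first_block pos => [j|]; [rewrite /colL addn0 ltn0|exact: m'L].
have rowT i : (i < k)%N -> (m (ix (colR true i)) + m (ix (colS false)) =
    m' (ix (colR true i)) + m' (ix (colS false)))%N.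
  by move=> lt_i; have := rowE true i lt_i; rewrite mL ?m'L.
case: (ltngtP (m' (ix (colR true 0))) (m (ix (colR true 0)))) => [lt_R|gt_R|eq_R].
- exists (ix (colR true 0)); split=> // l; rewrite ixK /colR /colL /= => [lt_l|]; last lia.
  by rewrite -(ix_val l) -[nat_of_ord l]/(colL true l) m'L ?mL.
- case: (standard_cross std) => [|i lt_i]; have := rowT 0%N k_gt0;
    last have := rowT i lt_i; lia.
have eqR i : (i < k)%N -> m' (ix (colR true i)) = m (ix (colR true i)).
  by move=> lt_i; have := rowT 0%N k_gt0; have := rowT i lt_i; lia.
have [eqSt eqSf] : m' (ix (colS true)) = m (ix (colS true)) /\
  m' (ix (colS false)) = m (ix (colS false)) by have := rowT 0%N k_gt0; lia.
case: (colL_zero_or_pos m false) => [mL'|pos]; last first.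
  apply: lex_lt_first_block pos => [j lt_j|]; last exact: m'L.
  have lt_jn : (j < n)%N by move: lt_j; rewrite /colL; lia.
  move: lt_j; case: (colP lt_jn) => [[] i lt_i ->|[] i lt_i ->|[] ->] lt_j;
    by [rewrite m'L ?mL | rewrite eqR | move: lt_j; rewrite /colR /colL /colS /=; lia].
case/eqP: neq_m; apply/mnmP => l; rewrite -(ix_val l).
case: (colP (ltn_ord l)) => [s i lt_i ->|[] i lt_i ->|[] ->] //.
- by case: s; rewrite (m'L _ _ lt_i) ?(mL _ lt_i) ?(mL' _ lt_i).
- by rewrite eqR.
- have := rowE false i lt_i.
  by rewrite (mL' _ lt_i) (m'L _ _ lt_i) -[~~ false]/true eqSt; lia.
Qed.

Lemma colL_neq_colS s s' i : (i < k)%N -> (colL s i == colS s') = false.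
Proof. by move=> lt_i; apply/eqP; rewrite /colL /colS; case: s s' => [] []; lia. Qed.

Lemma ix_eq a b : (a < n)%N -> (b < n)%N -> (ix a == ix b) = (a == b).
Proof. by move=> lt_a lt_b; rewrite -val_eqE /= !ixK. Qed.

(** * The fiber graph *)

Section LexBasis.
Variable K : fieldType.

Lemma lex_moves_init (f : {mpoly K[n]}) mf : toric_ideal (Ak k) f -> is_lead f mf ->
  exists2 w, w \in lex_moves & mdivides (posp w) mf.
Proof.
move=> If [f_mf max_mf].
have [/hasP [w Ww /forallP dvd]|none] :=
  boolP (has (fun w => [forall l, posp w l <= mf l]) lex_moves)%N; first by exists w.
have std : standard mf.
  by move=> w Ww dvd; move/hasPn: none => /(_ w Ww) /forallP; apply=> l; apply: dvd.
suff: monomial_map deg f != 0 by rewrite (monomial_map_toric mdegree_kernel If) eqxx.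
apply: (monomial_map_neq0 f_mf) => m f_m deg_m; case: (max_mf _ f_m) => [//|lt_m].
case: (eqVneq m mf) => [//|neq_m].
by case: (lex_lt_asym lt_m (standard_lex_min deg_m neq_m std)).
Qed.

Lemma lex_moves_rgb :
  reduced_groebner_basis (@toric_ideal K _ _ (Ak k)) (map (@binom K n) lex_moves).
Proof.
apply: binomials_rgb => [w Ww|w Ww|]; last exact: lex_moves_init.
  by split; [apply: lex_moves_kernel | apply: lex_moves_positive].
exact: lex_moves_private.
Qed.

Lemma lex_moves_R_lex w : w \in lex_moves -> R_lex K (Ak k) w.
Proof.
move=> Ww; exists (map (@binom K n) lex_moves); split; first exact: lex_moves_rgb.
by split; [apply: map_f | apply/binom_lead/lex_moves_positive].
Qed.

Lemma R_lex_colL w s i : R_lex K (Ak k) w -> (i < k)%N ->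
  coord w (colL s i) != 0 -> forall l, (posp w l <= (ix (colL s i) == l))%N.
Proof.
move=> Rw lt_i; have Ws := flip_move_lex_moves s lt_i.
exact: R_lex_posp_le1 Rw (lex_moves_kernel Ws) (lex_moves_positive Ws) (posp_flip_move s lt_i).
Qed.

Local Notation E := (fiber_adj (R_lex K (Ak k))).

(* Unless f i, w is nonzero at x_(colL s i), so by [R_lex_colL] its positive
   part cannot contain x_(colS s) or x_(colS (~~ s)); but one of them is 1. *)
Lemma R_lex_between_sides w s f g i : R_lex K (Ak k) w ->
  (w = vert s f - vert (~~ s) g \/ w = vert (~~ s) g - vert s f) -> (i < k)%N -> f i.
Proof.
move=> Rw Ew lt_i; apply/negPn/negP => nf.
have lt_L : (colL s i < n)%N by rewrite /colL; case: (s); lia.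
have w_L : coord w (colL s i) != 0.
  by case: Ew => ->; rewrite coordB !vert_colL // eqxx (negbTE nf); case: (s).
have le_L := R_lex_colL Rw lt_i w_L.
have w_S s' : coord w (colS s') != 1.
  apply/eqP => w_S; have := le_L (ix (colS s')).
  rewrite posp_eq1 // ix_eq ?colL_neq_colS //.
  by rewrite /colS; case: (s'); lia.
by case: Ew (w_S s) (w_S (~~ s)) => ->; rewrite !coordB !vert_colS eqxx; case: (s).
Qed.

Lemma cross_edge f g : E (vert true f) (vert false g) ->
  (forall i, (i < k)%N -> f i) /\ (forall i, (i < k)%N -> g i).
Proof.
move=> [_ R_fg]; split=> i lt_i.
  case: R_fg => R_fg; apply: (@R_lex_between_sides _ true f g i R_fg _ lt_i);
    by [left|right].
case: R_fg => R_fg; apply: (@R_lex_between_sides _ false g f i R_fg _ lt_i);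
  by [right|left].
Qed.

Lemma adj_flip s f i : (i < k)%N -> E (vert s f) (vert s (flip f i)).
Proof.
move=> lt_i; wlog f_i : f / ~~ f i.
  move=> adj_f; case/boolP: (f i) => [f_i|]; last exact: adj_f.
  apply: fiber_adj_sym; rewrite -(vert_ext s (fun j _ => flipK f i j)).
  by apply: adj_f; rewrite /flip eqxx f_i.
by apply: fiber_adj_R_lex; rewrite vert_sub_flip //; apply/lex_moves_R_lex/flip_move_lex_moves.
Qed.

Lemma adj_cross : E (vert true xpredT) (vert false xpredT).
Proof. exact/fiber_adj_R_lex/lex_moves_R_lex/mem_head. Qed.

(* A move w = +-(vert true xpred0 - vert true g) is nonzero at x_(colL true i0)
   for any i0 with g i0, so its positive part divides x_(colL true i0): this
   excludes a second such i0 and the sign -. *)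
Lemma base_neighbours v : V v -> E (vert true xpred0) v ->
  exists2 i, (i < k)%N & v = vert true (flip xpred0 i).
Proof.
move=> Vv; have [[] [g ->]] := fiber_vertP Vv => adj; last first.
  by have [/(_ 0%N k_gt0)] := cross_edge adj.
have [/existsP [i0 g_i0]|no_g] := boolP [exists i : 'I_k, g i]; last first.
  case: adj => + _; case; apply: vert_ext => i lt_i; apply/esym/negbTE.
  by apply: contra no_g => g_i; apply/existsP; exists (Ordinal lt_i).
have lt_i0 := ltn_ord i0; exists i0 => //; case: adj => _ R_g.
have le_L w : R_lex K (Ak k) w ->
    (w = vert true xpred0 - vert true g \/ w = vert true g - vert true xpred0) ->
    forall l, (posp w l <= (ix (colL true i0) == l))%N.
  move=> Rw Ew; apply: R_lex_colL Rw lt_i0 _.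
  by case: Ew => ->; rewrite coordB !vert_colL // g_i0.
case: R_g => R_g; last first.
  have := le_L _ R_g (or_intror erefl) (ix (colR true i0)).
  by rewrite posp_eq1 ?coordB ?vert_colR ?g_i0 // ix_eq /colR /colL; lia.
apply: vert_ext => j lt_j; rewrite /flip addbF; apply/idP/idP => [g_j|/eqP ->//].
have := le_L _ R_g (or_introl erefl) (ix (colL true j)).
by rewrite posp_eq1 ?coordB ?vert_colL ?g_j // ix_eq /colL; lia.
Qed.

Lemma flip_inj s f i j : (i < k)%N -> (j < k)%N ->
  vert s (flip f i) = vert s (flip f j) -> i = j.
Proof.
move=> lt_i lt_j /(congr1 (fun u : 'cV[int]_n => coord u (colR s i))) /eqP.
by rewrite !vert_colR // /flip !eqxx; case: (eqVneq i j) => // _; case: (f i).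
Qed.

Lemma flips_uniq s f : uniq [seq vert s (flip f i) | i <- iota 0 k].
Proof.
rewrite map_inj_in_uniq ?iota_uniq // => i j; rewrite !mem_iota !add0n.
exact: flip_inj.
Qed.

Lemma degree_at_least_k x : V x -> degree_at_least V E x k.
Proof.
move=> /fiber_vertP [s [f ->]]; exists [seq vert s (flip f i) | i <- iota 0 k].
split; rewrite ?flips_uniq ?size_map ?size_iota // => y /mapP [i].
by rewrite mem_iota add0n => lt_i ->; split; [apply: fiber_vert | apply: adj_flip].
Qed.

Lemma base_degree : has_degree V E (vert true xpred0) k.
Proof.
exists [seq vert true (flip xpred0 i) | i <- iota 0 k].
split; rewrite ?flips_uniq ?size_map ?size_iota // => v; split.
  case/mapP => i; rewrite mem_iota add0n => lt_i ->.
  by split; [apply: fiber_vert | apply: adj_flip].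
by case=> Vv /(base_neighbours Vv) [i lt_i ->]; apply: map_f; rewrite mem_iota.
Qed.

Local Notation edge_minus F := (fun a b => V a /\ V b /\ adj_minus E F a b).

(* Flipping the coordinates with f i = false one after the other. *)
Lemma path_to_full s f : clos_refl_trans _ (edge_minus [::]) (vert s f) (vert s xpredT).
Proof.
pose fm m j := (j < m)%N || f j.
suff path_m m : (m <= k)%N -> clos_refl_trans _ (edge_minus [::]) (vert s f) (vert s (fm m)).
  by rewrite -(@vert_ext s (fm k) xpredT) => [|j lt_j]; [exact: path_m | rewrite /fm lt_j].
elim: m => [_|m IHm lt_m]; first by rewrite (@vert_ext s (fm 0) f) //; apply: rt_refl.
apply: rt_trans (IHm (ltnW lt_m)) _.
have fm_S j : fm m.+1 j = if j == m then true else fm m j.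
  by rewrite /fm ltnS leq_eqVlt; case: eqP => [->|].
case f_m: (f m).
  rewrite (@vert_ext s (fm m.+1) (fm m)) => [|j _]; first exact: rt_refl.
  by rewrite fm_S; case: eqP => // ->; rewrite /fm f_m orbT.
rewrite (@vert_ext s (fm m.+1) (flip (fm m) m)) => [|j _]; last first.
  by rewrite fm_S /flip; case: eqP => [->|_] //; rewrite /fm ltnn f_m.
apply: rt_step; split; [apply: fiber_vert | split; [apply: fiber_vert |]].
by split; [apply: adj_flip|].
Qed.

Lemma connected_fiber : graph_connected V (adj_minus E [::]).
Proof.
have sym_step a b : edge_minus [::] a b -> edge_minus [::] b a.
  by case=> Va [Vb [/fiber_adj_sym adj _]].
move=> x y /fiber_vertP [s [f ->]] /fiber_vertP [s' [g ->]].
apply: rt_trans (path_to_full s f) _.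
apply: rt_trans _ (clos_rt_sym sym_step (path_to_full s' g)).
have cross_step : edge_minus [::] (vert true xpredT) (vert false xpredT).
  split; [apply: fiber_vert | split; [apply: fiber_vert |]].
  by split; [apply: adj_cross|].
case: s s' => [] []; try exact: rt_refl; apply: rt_step; [exact: cross_step | exact: sym_step].
Qed.

(* Every edge between the two sides is the cross edge, so removing it
   separates the sides. *)
Lemma cross_bridge :
  ~ graph_connected V (adj_minus E [:: (vert true xpredT, vert false xpredT)]).
Proof.
set F := [:: _]; move=> conn.
suff side_inv a b :
    clos_refl_trans _ (edge_minus F) a b -> coord a (colS true) = coord b (colS true).
  by move: (side_inv _ _ (conn _ _ (fiber_vert true xpredT) (fiber_vert false xpredT)));
    rewrite !vert_colS.
elim=> [{}a {}b [Va [Vb [adj [nF1 nF2]]]]|//|x y z _ -> _ ->] //.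
move: Va Vb adj nF1 nF2 => /fiber_vertP [s [f ->]] /fiber_vertP [s' [g ->]] adj.
rewrite !vert_colS !inE; case: s s' adj => [] [] adj //.
  have [f_T g_T] := cross_edge adj; case/negP.
  by rewrite (@vert_ext _ f xpredT f_T) (@vert_ext _ g xpredT g_T).
have [g_T f_T] := cross_edge (fiber_adj_sym adj); move=> _; case/negP.
by rewrite (@vert_ext _ f xpredT f_T) (@vert_ext _ g xpredT g_T).
Qed.

End LexBasis.

End Ak.

Theorem corollary1 (K : fieldType) (k : nat) (hk : (1 <= k)%N) :
  let V := fiber (Ak k) (e_last k) in
  let E := fiber_adj (R_lex K (Ak k)) in
  edge_connectivity_is V E 1 /\ min_degree_is V E k.
Proof.
move=> V E; have [neq_cross _] := adj_cross hk K.
split; split.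
- split=> [|[|? ?] // _]; last exact: connected_fiber.
  by exists (vert k true xpredT), (vert k false xpredT); split; [|split]; try apply: fiber_vert.
- move=> m [_ conn]; rewrite leqNgt; apply/negP => lt_1m.
  exact: (cross_bridge hk (conn [:: _] lt_1m)).
- by exists (vert k true xpred0); split; [apply: fiber_vert | apply: base_degree].
- exact: degree_at_least_k.
Qed.
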